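(* Let $m\ge 1$, $1\le B_1\le m$, $B_2\ge 1$, and for $i\in[m]$ let $g_i:\mathbb{R}^d\to\mathbb{R}^p$ be $C_g$-Lipschitz and accessed through a stochastic oracle $g_i(\cdot;\xi)$ satisfying, for all $\mathbf{x},\mathbf{y}$ and each fresh oracle sample $\xi$: $\mathbb{E}[g_i(\mathbf{x};\xi)]=g_i(\mathbf{x})$, $\mathbb{E}\|g_i(\mathbf{x};\xi)-g_i(\mathbf{x})\|^2\le\sigma^2/B_2$, $\mathbb{E}\|g_i(\mathbf{x};\xi)-g_i(\mathbf{y};\xi)\|^2\le C_g^2\|\mathbf{x}-\mathbf{y}\|^2$. Let $(\mathbf{w}_t)$ be a sequence in $\mathbb{R}^d$ with $\mathbf{w}_{t+1},\mathbf{w}_t$ determined before iteration $t+1$. At iteration $t+1$ a subset $\mathcal{B}_1^{t+1}\subseteq[m]$ of size $B_1$ is drawn uniformly at random and for $i\in\mathcal{B}_1^{t+1}$ a fresh sample $\xi_{t+1}^i$ is drawn, independently of the past, and $$\mathbf{u}_{t+1}^i=\begin{cases}(1-\beta_{t+1})\mathbf{u}_{t}^i+\beta_{t+1} g_i(\mathbf{w}_{t+1};\xi_{t+1}^i)+\gamma_{t+1}\big(g_i(\mathbf{w}_{t+1};\xi_{t+1}^i)-g_i(\mathbf{w}_{t};\xi_{t+1}^i)\big), & i\in\mathcal{B}_1^{t+1},\\ \mathbf{u}_{t}^i, & \text{otherwise},\end{cases}$$ with $\gamma_{t+1}=\frac{m-B_1}{B_1(1-\beta_{t+1})}+(1-\beta_{t+1})$.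 If $\beta_{t+1}\le\frac12$, then $$\mathbb{E}\|\mathbf{u}_{t+1}-\mathbf{u}_t\|^2\le\frac{2B_1\beta_{t+1}^2\sigma^2}{B_2}+\frac{4B_1\beta_{t+1}^2}{m}\mathbb{E}\|\mathbf{u}_t-g(\mathbf{w}_t)\|^2+\frac{9m^2C_g^2}{B_1}\mathbb{E}\|\mathbf{w}_{t+1}-\mathbf{w}_t\|^2,$$ where $\|\mathbf{u}_{t+1}-\mathbf{u}_t\|^2=\sum_i\|\mathbf{u}_{t+1}^i-\mathbf{u}_t^i\|^2$ and $\|\mathbf{u}_t-g(\mathbf{w}_t)\|^2=\sum_i\|\mathbf{u}_t^i-g_i(\mathbf{w}_t)\|^2$.
   Context: $\mathbf{u}_t=(\mathbf{u}_t^1,\dots,\mathbf{u}_t^m)$ with $\mathbf{u}_t^i\in\mathbb{R}^p$; $g(\mathbf{w})=(g_1(\mathbf{w}),\dots,g_m(\mathbf{w}))$. *)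

From HB Require Import structures.
From mathcomp Require Import all_boot all_order all_algebra.
From mathcomp Require Import all_classical all_reals all_analysis.
Set Implicit Arguments. Unset Strict Implicit. Unset Printing Implicit Defensive.
Import Order.TTheory GRing.Theory Num.Theory.
Local Open Scope ring_scope.

Definition sqnorm (R : realType) (n : nat) (v : 'rV[R]_n) : R :=
  \sum_(k < n) (v ord0 k) ^+ 2.

Definition enorm (R : realType) (n : nat) (v : 'rV[R]_n) : R :=
  Num.sqrt (sqnorm v).

Definition gamma_coef (R : realType) (m B1 : nat) (beta : R) : R :=
  ((m%:R - B1%:R) / (B1%:R * (1 - beta))) + (1 - beta).

Definition u_next (R : realType) (m dd p : nat) (Xi : Type)
  (g : 'I_m -> 'rV[R]_dd -> Xi -> 'rV[R]_p) (beta gamma : R)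
  (wt wt1 : 'rV[R]_dd) (uti : 'rV[R]_p) (S : {set 'I_m}) (i : 'I_m) (xi : Xi)
  : 'rV[R]_p :=
  if i \in S then
    (1 - beta) *: uti + beta *: g i wt1 xi + gamma *: (g i wt1 xi - g i wt xi)
  else uti.

From HB Require Import structures.
From mathcomp Require Import all_boot all_order all_algebra.
From mathcomp Require Import all_classical all_reals all_analysis.
From mathcomp Require Import ring lra measurable_realfun.
Set Implicit Arguments. Unset Strict Implicit. Unset Printing Implicit Defensive.
Import Order.TTheory GRing.Theory Num.Theory.
Local Open Scope ring_scope.

(* Only the sampled blocks move, and a sampled block moves by
     beta (g_i(w_t; xi) - u_t^i) + (beta + gamma) (g_i(w_{t+1}; xi) - g_i(w_t; xi)).
   By |a + b|^2 <= 2|a|^2 + 2|b|^2, the bias-variance identity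
     E|g_i(w_t; xi) - u|^2 = E|g_i(w_t; xi) - g_i(w_t)|^2 + |u - g_i(w_t)|^2
   and the mean-square Lipschitz bound, the expected squared move of block i
   is at most 2 beta^2 (sigma^2/B2 + |u_t^i - g_i(w_t)|^2)
   + 2 (beta + gamma)^2 C_g^2 |w_{t+1} - w_t|^2.  A uniform B1-subset of [m]
   contains each block with probability B1/m, and
   B1 (beta + gamma) = B1 + (m - B1)/(1 - beta) <= 2m when beta <= 1/2, so the
   last coefficient becomes 2 (B1 (beta + gamma))^2 C_g^2 / B1 <= 9 m^2 C_g^2 / B1. *)

Section sqnorm.
Variables (R : realType) (n : nat).
Implicit Types (u v : 'rV[R]_n) (a b : R).

Lemma sqnorm_ge0 v : 0 <= sqnorm v.
Proof. by apply: sumr_ge0 => k _; exact: sqr_ge0. Qed.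

Lemma sqnorm0 : sqnorm (0 : 'rV[R]_n) = 0.
Proof. by apply: big1 => k _; rewrite mxE expr0n. Qed.

Lemma sqnorm_coord_le v k : v ord0 k ^+ 2 <= sqnorm v.
Proof.
rewrite /sqnorm (bigD1 k) //= lerDl.
by apply: sumr_ge0 => j _; exact: sqr_ge0.
Qed.

Lemma sqnormDZ_le a b u v :
  sqnorm (a *: u + b *: v) <= 2 * a ^+ 2 * sqnorm u + 2 * b ^+ 2 * sqnorm v.
Proof.
rewrite /sqnorm !mulr_sumr -big_split /=; apply: ler_sum => k _; rewrite !mxE.
have := sqr_ge0 (a * u ord0 k - b * v ord0 k); nra.
Qed.

End sqnorm.

Section ksubsets.
Variables (T : finType) (k : nat).
Hypothesis k_gt0 : (0 < k)%N.

Lemma card_ksubsets_mem (i : T) :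
  #|[set S : {set T} | (#|S| == k) && (i \in S)]| = 'C(#|T|.-1, k.-1).
Proof.
have iNsub (A : {set T}) : A \subset [set~ i] -> i \notin A.
  by move=> sA; apply/negP => /(fintype.subsetP sA); rewrite !inE eqxx.
have -> : [set S : {set T} | (#|S| == k) && (i \in S)] =
    (fun A => i |: A) @: [set A : {set T} | A \subset [set~ i] & #|A| == k.-1].
  apply/finset.setP => S; rewrite inE; apply/andP/finset.imsetP.
  - move=> [/eqP cS iS]; exists (S :\ i); last by rewrite finset.setD1K.
    by rewrite inE subsetDr -cS (cardsD1 i S) iS /= add0n.
  - move=> [A]; rewrite inE => /andP[sA /eqP cA] ->.
    by rewrite cardsU1 iNsub // cA add1n prednK // finset.setU11.
rewrite card_in_imset; first by rewrite cards_draws cardsC1.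
move=> A1 A2; rewrite !inE => /andP[s1 _] /andP[s2 _] e.
by rewrite -(finset.setU1K (iNsub _ s1)) -(finset.setU1K (iNsub _ s2)) e.
Qed.

Lemma sum_ksubsets_sum (V : nmodType) (K : T -> V) :
  \sum_(S : {set T} | #|S| == k) \sum_(i in S) K i
  = (\sum_i K i) *+ 'C(#|T|.-1, k.-1).
Proof.
under eq_bigr do rewrite big_mkcond /=.
rewrite exchange_big /= -sumrMnl; apply: eq_bigr => i _.
rewrite -big_mkcondr /= sumr_const -(card_ksubsets_mem i); congr (_ *+ _).
by apply: eq_card => S; rewrite inE.
Qed.

Lemma mean_ksubsets_sum (F : numFieldType) (K : T -> F) : (k <= #|T|)%N ->
  'C(#|T|, k)%:R^-1 * \sum_(S : {set T} | #|S| == k) \sum_(i in S) K i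
  = k%:R / #|T|%:R * \sum_i K i.
Proof.
move=> k_le; have n_gt0 : (0 < #|T|)%N by apply: leq_trans k_le.
have diag : #|T|%:R * 'C(#|T|.-1, k.-1)%:R = k%:R * 'C(#|T|, k)%:R :> F.
  by rewrite -!natrM mul_bin_diag prednK.
have n_neq0 : #|T|%:R != 0 :> F by rewrite pnatr_eq0 -lt0n.
have C_neq0 : 'C(#|T|, k)%:R != 0 :> F by rewrite pnatr_eq0 -lt0n bin_gt0.
rewrite sum_ksubsets_sum -[(\sum_i K i) *+ _]mulr_natr.
have -> : 'C(#|T|.-1, k.-1)%:R = k%:R * 'C(#|T|, k)%:R / #|T|%:R :> F.
  by rewrite -diag mulrAC mulfV ?mul1r.
by field; apply/andP.
Qed.

End ksubsets.

Section measure_sqnorm.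
Context d (T : measurableType d) (R : realType).
Local Open Scope ereal_scope.

Lemma measurable_sqnormB n (F G : T -> 'rV[R]_n) :
  (forall k, measurable_fun setT (fun x => F x ord0 k)) ->
  (forall k, measurable_fun setT (fun x => G x ord0 k)) ->
  measurable_fun setT (fun x => sqnorm (F x - G x)).
Proof.
move=> mF mG; apply: measurable_sum => k; apply: measurable_funX.
by under eq_fun do rewrite !mxE; exact: measurable_funB.
Qed.

Variable mu : {measure set T -> \bar R}.

(* Unlike [ge0_le_integral], no measurability is needed: the integral of a
   nonnegative function is a supremum over the simple functions below it. *)
Lemma ge0_le_integralT (f1 f2 : T -> \bar R) :
  (forall x, 0 <= f1 x) -> (forall x, f1 x <= f2 x) ->
  \int[mu]_x f1 x <= \int[mu]_x f2 x.
Proof.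
move=> f1_ge0 f12; have f2_ge0 x := le_trans (f1_ge0 x) (f12 x).
rewrite !ge0_integralTE //; apply: ge_ereal_sup => _ [h /= hf1 <-].
by apply: ereal_sup_ubound; exists h => //= x; exact: le_trans (hf1 x) (f12 x).
Qed.

Lemma integral_sqnormB n (F G : T -> 'rV[R]_n) :
  (forall k, measurable_fun setT (fun x => F x ord0 k)) ->
  (forall k, measurable_fun setT (fun x => G x ord0 k)) ->
  \int[mu]_x (sqnorm (F x - G x))%:E
  = \sum_(k < n) \int[mu]_x ((F x ord0 k - G x ord0 k) ^+ 2)%:E.
Proof.
move=> mF mG; rewrite -ge0_integral_sum //.
- apply: eq_integral => x _; rewrite sumEFin; congr EFin.
  by apply: eq_bigr => k _; rewrite !mxE.
- move=> k; apply/measurable_EFinP; apply: measurable_funX.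
  exact: measurable_funB.
- by move=> k x _; rewrite lee_fin sqr_ge0.
Qed.

Lemma integrable_sqr (h : T -> R) : measurable_fun setT h ->
  \int[mu]_x (h x ^+ 2)%:E < +oo -> mu.-integrable setT (fun x => (h x ^+ 2)%:E).
Proof.
move=> mh h2_fin; apply/integrableP; split.
  by apply/measurable_EFinP; exact: measurable_funX.
by under eq_integral do rewrite abse_EFin ger0_norm ?sqr_ge0//.
Qed.

End measure_sqnorm.

Section probability_sqnorm.
Context d (T : measurableType d) (R : realType) (mu : probability T R).
Local Open Scope ereal_scope.

Lemma integral_cst_probability (r : R) : \int[mu]_x r%:E = r%:E.
Proof. by have := expectation_cst mu r; rewrite unlock. Qed.

Lemma integrable_of_sqr (h : T -> R) : measurable_fun setT h ->
  \int[mu]_x (h x ^+ 2)%:E < +oo -> mu.-integrable setT (EFin \o h).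
Proof.
move=> mh h2_fin; have ih2 := integrable_sqr mh h2_fin.
have i1 : mu.-integrable setT (fun _ => 1%:E).
  exact: finite_measure_integrable_cst.
apply: le_integrable (integrableD measurableT i1 ih2) => //.
  exact/measurable_EFinP.
move=> x _ /=; rewrite lee_fin; apply: le_trans (ler_norm _).
rewrite -[(h x ^+ 2)%R]real_normK ?num_real //.
have := sqr_ge0 (`|h x| - 1)%R; have := normr_ge0 (h x); nra.
Qed.

Lemma integral_sqrB_mean (f : T -> R) (a b : R) : measurable_fun setT f ->
  \int[mu]_x (f x)%:E = a%:E -> \int[mu]_x ((f x - a) ^+ 2)%:E < +oo ->
  \int[mu]_x ((f x - b) ^+ 2)%:E
  = \int[mu]_x ((f x - a) ^+ 2)%:E + ((b - a) ^+ 2)%:E.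
Proof.
move=> mf mean_f var_fin; pose h x := (f x - a)%R.
have mh : measurable_fun setT h by exact: measurable_funB.
have ih2 := integrable_sqr mh var_fin.
have ih := integrable_of_sqr mh var_fin.
have icst r : mu.-integrable setT (fun _ => r%:E).
  exact: finite_measure_integrable_cst.
have mean_h : \int[mu]_x (h x)%:E = 0.
  have e : \int[mu]_x ((h x)%:E + a%:E) = a%:E.
    by rewrite -[RHS]mean_f; apply: eq_integral => x _; rewrite -EFinD subrK.
  rewrite integralD // integral_cst_probability in e.
  move: e (integrable_fin_num measurableT ih).
  by case: (\int[mu]_x (h x)%:E) => //= r [e] _; congr EFin; lra.
rewrite (eq_integral (fun x => (h x ^+ 2)%:E
    + ((2 * (a - b))%:E * (h x)%:E + ((b - a) ^+ 2)%:E))); last first.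
  by move=> x _; rewrite -EFinM -!EFinD /h; congr EFin; ring.
rewrite integralD //; last by apply: integrableD => //; exact: integrableZl.
rewrite integralD //; last exact: integrableZl.
by rewrite integralZl // mean_h mule0 add0e integral_cst_probability.
Qed.

Lemma integral_sqnormB_mean n (G : T -> 'rV[R]_n) (gb u : 'rV[R]_n) :
  (forall k, measurable_fun setT (fun x => G x ord0 k)) ->
  (forall k, \int[mu]_x (G x ord0 k)%:E = (gb ord0 k)%:E) ->
  \int[mu]_x (sqnorm (G x - gb))%:E < +oo ->
  \int[mu]_x (sqnorm (G x - u))%:E
  = \int[mu]_x (sqnorm (G x - gb))%:E + (sqnorm (u - gb))%:E.
Proof.
move=> mG mean_G var_fin.
have mcst (v : 'rV[R]_n) k := @measurable_cst _ _ T _ setT (v ord0 k).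
rewrite !(integral_sqnormB mu mG (mcst _)) /sqnorm -sumEFin -big_split /=.
apply: eq_bigr => k _; rewrite !mxE; apply: integral_sqrB_mean => //.
apply: le_lt_trans var_fin; apply: ge0_le_integralT => x; rewrite lee_fin.
  exact: sqr_ge0.
by have := sqnorm_coord_le (G x - gb) k; rewrite !mxE.
Qed.

Lemma ge0_integral_affine (a b c : R) (f h : T -> R) :
  (0 <= a)%R -> (0 <= b)%R -> (0 <= c)%R ->
  measurable_fun setT f -> measurable_fun setT h ->
  (forall x, 0 <= f x)%R -> (forall x, 0 <= h x)%R ->
  \int[mu]_x (a + b * f x + c * h x)%:E
  = a%:E + b%:E * \int[mu]_x (f x)%:E + c%:E * \int[mu]_x (h x)%:E.
Proof.
move=> a_ge0 b_ge0 c_ge0 mf mh f_ge0 h_ge0.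
have mbf : measurable_fun setT (fun x => (b * f x)%R) by exact: measurable_funM.
have mch : measurable_fun setT (fun x => (c * h x)%R) by exact: measurable_funM.
under eq_integral do rewrite !EFinD.
rewrite ge0_integralD //; first last.
- exact/measurable_EFinP.
- by move=> x _; rewrite lee_fin mulr_ge0.
- by apply: emeasurable_funD; [exact: measurable_cst | exact/measurable_EFinP].
- by move=> x _; rewrite adde_ge0 // lee_fin mulr_ge0.
rewrite ge0_integralD //; first last.
- exact/measurable_EFinP.
- by move=> x _; rewrite lee_fin mulr_ge0.
rewrite integral_cst_probability.
under eq_integral do rewrite EFinM.
under [X in _ + _ + X]eq_integral do rewrite EFinM.
rewrite !ge0_integralZl_EFin //.
- by move=> x _; rewrite lee_fin.
- exact/measurable_EFinP.
- by move=> x _; rewrite lee_fin.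
- exact/measurable_EFinP.
Qed.

Lemma integral_sqnorm_update_le n (G0 G1 : T -> 'rV[R]_n) (gb u : 'rV[R]_n)
    (b c s L : R) :
  (forall k, measurable_fun setT (fun x => G0 x ord0 k)) ->
  (forall k, measurable_fun setT (fun x => G1 x ord0 k)) ->
  (forall k, \int[mu]_x (G0 x ord0 k)%:E = (gb ord0 k)%:E) ->
  \int[mu]_x (sqnorm (G0 x - gb))%:E <= s%:E ->
  \int[mu]_x (sqnorm (G1 x - G0 x))%:E <= L%:E ->
  \int[mu]_x (sqnorm ((1 - b) *: u + b *: G1 x + c *: (G1 x - G0 x) - u))%:E
  <= (2 * b ^+ 2 * (s + sqnorm (u - gb)) + 2 * (b + c) ^+ 2 * L)%:E.
Proof.
move=> mG0 mG1 mean_G0 var_G0 msq_G.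
have mu_cst k := @measurable_cst _ _ T _ setT (u ord0 k).
have update_split x : ((1 - b) *: u + b *: G1 x + c *: (G1 x - G0 x) - u
    = b *: (G0 x - u) + (b + c) *: (G1 x - G0 x))%R.
  by apply/rowP => k; rewrite !mxE; ring.
apply: le_trans (@ge0_le_integralT _ _ _ mu _ (fun x =>
    (0 + 2 * b ^+ 2 * sqnorm (G0 x - u)
     + 2 * (b + c) ^+ 2 * sqnorm (G1 x - G0 x))%:E) _ _) _.
- by move=> x; rewrite lee_fin sqnorm_ge0.
- by move=> x; rewrite lee_fin update_split add0r sqnormDZ_le.
have coef_ge0 r : (0 <= 2 * r ^+ 2)%R := mulr_ge0 (ler0n _ 2) (sqr_ge0 r).
rewrite ge0_integral_affine ?coef_ge0 //; last 4 first.
- exact: measurable_sqnormB.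
- exact: measurable_sqnormB.
- by move=> x; exact: sqnorm_ge0.
- by move=> x; exact: sqnorm_ge0.
rewrite (@integral_sqnormB_mean _ G0 gb u mG0 mean_G0); last first.
  exact: le_lt_trans var_G0 (ltry s).
rewrite add0e EFinD !EFinM; apply: leeD; apply: lee_wpmul2l.
- by rewrite lee_fin coef_ge0.
- by rewrite EFinD leeD2r.
- by rewrite lee_fin coef_ge0.
- exact: msq_G.
Qed.

End probability_sqnorm.

Lemma gamma_coef_sqr_le (R : realType) (m B1 : nat) (beta : R) :
  (0 < B1 <= m)%N -> 0 <= beta <= 1 / 2 ->
  (B1%:R * (beta + gamma_coef m B1 beta)) ^+ 2 <= 4 * m%:R ^+ 2.
Proof.
move=> /andP[B1_gt0 B1_le_m] /andP[beta_ge0 beta_le].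
have B1_pos : 0 < B1%:R :> R by rewrite ltr0n.
have B1_le : B1%:R <= m%:R :> R by rewrite ler_nat.
have -> : B1%:R * (beta + gamma_coef m B1 beta)
    = B1%:R + (m%:R - B1%:R) / (1 - beta).
  by rewrite /gamma_coef; field; rewrite subr_eq0 !gt_eqF //; lra.
have q_ge0 : 0 <= (m%:R - B1%:R) / (1 - beta) by apply: divr_ge0; lra.
have q_le : (m%:R - B1%:R) / (1 - beta) <= 2 * (m%:R - B1%:R).
  by rewrite ler_pdivrMr; nra.
nra.
Qed.

Section stochastic_update.
Variables (R : realType) (m dd p : nat).
Variables (dX : measure_display) (Xi : measurableType dX) (mu : probability Xi R).
Variables (g : 'I_m -> 'rV[R]_dd -> Xi -> 'rV[R]_p)
  (gbar : 'I_m -> 'rV[R]_dd -> 'rV[R]_p).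
Variables (Cg s : R).
Hypothesis g_meas : forall i x k, measurable_fun setT (fun xi => g i x xi ord0 k).
Hypothesis g_mean : forall i x k,
  (\int[mu]_xi (g i x xi ord0 k)%:E = (gbar i x ord0 k)%:E)%E.
Hypothesis g_var : forall i x,
  (\int[mu]_xi (sqnorm (g i x xi - gbar i x))%:E <= s%:E)%E.
Hypothesis g_msLip : forall i x y,
  (\int[mu]_xi (sqnorm (g i x xi - g i y xi))%:E
   <= (Cg ^+ 2 * sqnorm (x - y))%:E)%E.

Lemma integral_sqnorm_u_next_le beta gamma w w1 (u : 'I_m -> 'rV[R]_p) S i :
  (\int[mu]_xi (sqnorm (u_next g beta gamma w w1 (u i) S i xi - u i))%:E
  <= (if i \in S then 2 * beta ^+ 2 * (s + sqnorm (u i - gbar i w))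
        + 2 * (beta + gamma) ^+ 2 * (Cg ^+ 2 * sqnorm (w1 - w)) else 0)%:E)%E.
Proof.
rewrite /u_next; case: (i \in S); last by rewrite subrr sqnorm0 integral0.
exact: integral_sqnorm_update_le.
Qed.

Lemma mean_sqnorm_u_next_le (B1 : nat) beta w w1 (u : 'I_m -> 'rV[R]_p) :
  (0 < B1 <= m)%N -> 0 <= beta <= 1 / 2 ->
  (('C(m, B1)%:R^-1)%:E * \sum_(S : {set 'I_m} | #|S| == B1) \sum_(i < m)
      \int[mu]_xi (sqnorm (u_next g beta (gamma_coef m B1 beta) w w1 (u i) S i xi
                           - u i))%:E
  <= (2 * B1%:R * beta ^+ 2 * s
      + 4 * B1%:R * beta ^+ 2 / m%:R * \sum_(i < m) sqnorm (u i - gbar i w)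
      + 9 * m%:R ^+ 2 * Cg ^+ 2 / B1%:R * sqnorm (w1 - w))%:E)%E.
Proof.
move=> B1_bnd beta_bnd; have /andP[B1_gt0 B1_le_m] := B1_bnd.
set gamma := gamma_coef m B1 beta.
set U := \sum_(i < m) sqnorm (u i - gbar i w); set D := sqnorm (w1 - w).
pose K i := 2 * beta ^+ 2 * (s + sqnorm (u i - gbar i w))
  + 2 * (beta + gamma) ^+ 2 * (Cg ^+ 2 * D).
apply: (@le_trans _ _ (('C(m, B1)%:R^-1
    * \sum_(S : {set 'I_m} | #|S| == B1) \sum_(i in S) K i)%:E)).
  rewrite EFinM; apply: lee_wpmul2l; first by rewrite lee_fin invr_ge0.
  rewrite -sumEFin; apply: lee_sum => S _.
  rewrite [X in (_ <= X%:E)%E]big_mkcond -sumEFin /=.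
  by apply: lee_sum => i _; exact: integral_sqnorm_u_next_le.
have := mean_ksubsets_sum B1_gt0 K; rewrite card_ord => -> //; rewrite lee_fin.
have sumK : \sum_i K i
    = m%:R * (2 * beta ^+ 2 * s + 2 * (beta + gamma) ^+ 2 * (Cg ^+ 2 * D))
      + 2 * beta ^+ 2 * U.
  rewrite (eq_bigr (fun i => 2 * beta ^+ 2 * s
      + 2 * (beta + gamma) ^+ 2 * (Cg ^+ 2 * D)
      + 2 * beta ^+ 2 * sqnorm (u i - gbar i w))); last by move=> i _; rewrite /K; ring.
  by rewrite big_split /= sumr_const card_ord -[_ *+ m]mulr_natl -mulr_sumr.
have m_pos : 0 < m%:R :> R by rewrite ltr0n (leq_trans B1_gt0).
have B1_pos : 0 < B1%:R :> R by rewrite ltr0n.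
have U_ge0 : 0 <= U by apply: sumr_ge0 => i _; exact: sqnorm_ge0.
have D_ge0 : 0 <= D := sqnorm_ge0 _.
have gamma_le := gamma_coef_sqr_le B1_bnd beta_bnd.
have Cg2_ge0 := sqr_ge0 Cg; have beta2_ge0 := sqr_ge0 beta.
rewrite sumK; set X := B1%:R * (beta + gamma) in gamma_le *.
have -> : B1%:R / m%:R * (m%:R * (2 * beta ^+ 2 * s
    + 2 * (beta + gamma) ^+ 2 * (Cg ^+ 2 * D)) + 2 * beta ^+ 2 * U)
    = 2 * B1%:R * beta ^+ 2 * s + 2 * B1%:R * beta ^+ 2 / m%:R * U
      + 2 * X ^+ 2 * Cg ^+ 2 / B1%:R * D.
  by rewrite /X; field; rewrite !gt_eqF.
rewrite lerD // ?lerD // ler_wpM2r //.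
  by rewrite ler_wpM2r ?invr_ge0 ?ler0n //; nra.
by rewrite ler_wpM2r ?invr_ge0 ?ler0n //; nra.
Qed.

End stochastic_update.

Local Open Scope classical_set_scope.

Theorem lemma6 (R : realType) (m B1 B2 dd p : nat)
  (dO : measure_display) (Omega : measurableType dO) (P : probability Omega R)
  (dX : measure_display) (Xi : measurableType dX) (mu : probability Xi R)
  (g : 'I_m -> 'rV[R]_dd -> Xi -> 'rV[R]_p) (gbar : 'I_m -> 'rV[R]_dd -> 'rV[R]_p)
  (Cg sigma beta : R)
  (wt wt1 : Omega -> 'rV[R]_dd) (ut : Omega -> 'I_m -> 'rV[R]_p) :
  (1 <= m)%N -> (1 <= B1)%N -> (B1 <= m)%N -> (1 <= B2)%N ->
  0 <= Cg ->
  (* g_i is C_g-Lipschitz *)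
  (forall i x y, enorm (gbar i x - gbar i y) <= Cg * enorm (x - y)) ->
  (* the stochastic oracle: measurability, unbiasedness, variance, mean-square Lipschitz *)
  (forall i x k, measurable_fun setT (fun xi => g i x xi ord0 k)) ->
  (forall i x k, (\int[mu]_xi (g i x xi ord0 k)%:E = (gbar i x ord0 k)%:E)%E) ->
  (forall i x, (\int[mu]_xi (sqnorm (g i x xi - gbar i x))%:E
                  <= (sigma ^+ 2 / B2%:R)%:E)%E) ->
  (forall i x y, (\int[mu]_xi (sqnorm (g i x xi - g i y xi))%:E
                  <= (Cg ^+ 2 * sqnorm (x - y))%:E)%E) ->
  (* the past (u_t, w_t, w_{t+1}) consists of random variables *)
  (forall i k, measurable_fun setT (fun w => ut w i ord0 k)) ->
  (forall k, measurable_fun setT (fun w => wt w ord0 k)) ->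
  (forall k, measurable_fun setT (fun w => wt1 w ord0 k)) ->
  (forall i k, measurable_fun setT (fun w => gbar i (wt w) ord0 k)) ->
  (forall i k, measurable_fun setT (fun z : Omega * Xi => g i (wt z.1) z.2 ord0 k)) ->
  (forall i k, measurable_fun setT (fun z : Omega * Xi => g i (wt1 z.1) z.2 ord0 k)) ->
  0 <= beta -> beta <= 1 / 2 ->
  let gamma := gamma_coef m B1 beta in
  (* E || u_{t+1} - u_t ||^2 : expectation over the past (P), the uniformly
     drawn B1-subset S of [m], and the independent fresh samples xi^i ~ mu *)
  (\int[P]_w ((('C(m, B1))%:R^-1)%:E *
      \sum_(S : {set 'I_m} | #|S| == B1)
        \sum_(i < m)
          \int[mu]_xi (sqnorm (u_next g beta gamma (wt w) (wt1 w) (ut w i) S i xi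
                               - ut w i))%:E)
   <= (2 * B1%:R * beta ^+ 2 * sigma ^+ 2 / B2%:R)%:E
      + (4 * B1%:R * beta ^+ 2 / m%:R)%:E *
          \int[P]_w (\sum_(i < m) sqnorm (ut w i - gbar i (wt w)))%:E
      + (9 * m%:R ^+ 2 * Cg ^+ 2 / B1%:R)%:E *
          \int[P]_w (sqnorm (wt1 w - wt w))%:E)%E.
Proof.
move=> _ B1_gt0 B1_le_m _ _ _ g_meas g_mean g_var g_msLip ut_meas wt_meas wt1_meas
  gbar_meas _ _ beta_ge0 beta_le; cbv zeta.
have B1_bnd : (0 < B1 <= m)%N by rewrite B1_gt0.
have beta_bnd : 0 <= beta <= 1 / 2 by rewrite beta_ge0.
pose U w := \sum_(i < m) sqnorm (ut w i - gbar i (wt w)).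
pose D w := sqnorm (wt1 w - wt w).
have U_meas : measurable_fun setT U.
  by apply: measurable_sum => i; exact: measurable_sqnormB.
have D_meas : measurable_fun setT D by exact: measurable_sqnormB.
apply: le_trans (@ge0_le_integralT _ _ _ P _ (fun w =>
  (2 * B1%:R * beta ^+ 2 * (sigma ^+ 2 / B2%:R) + 4 * B1%:R * beta ^+ 2 / m%:R * U w
   + 9 * m%:R ^+ 2 * Cg ^+ 2 / B1%:R * D w)%:E) _ _) _.
- move=> w; apply: mule_ge0; first by rewrite lee_fin invr_ge0.
  apply: sume_ge0 => S _; apply: sume_ge0 => i _; apply: integral_ge0 => xi _.
  by rewrite lee_fin sqnorm_ge0.
- by move=> w; exact: mean_sqnorm_u_next_le.
have U_ge0 w : 0 <= U w by apply: sumr_ge0 => i _; exact: sqnorm_ge0.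
have D_ge0 w : 0 <= D w := sqnorm_ge0 _.
rewrite ge0_integral_affine //; first by rewrite mulrA.
all: by repeat first [exact: sqr_ge0 | exact: ler0n | apply: mulr_ge0 | apply: divr_ge0].
Qed.
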